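(* Let $r, J, L \ge 1$ be integers. Let $\mathbf{H}(X) = [h_{j,l}(X)]_{j \in [J], l \in [L]}$ be a $J \times L$ matrix whose entries are elements of $\mathbb{F}_2[X]/\langle X^r - 1\rangle$, each of which is either $0$, a monomial $X^{a}$, or a binomial $X^{a} + X^{b}$ with $a \not\equiv b \pmod r$. Let $H$ be the associated $Jr \times Lr$ binary parity-check matrix, and assume $H$ has constant column weight and constant row weight. For each $j,l$ let $E_{j,l} \subseteq \mathbb{Z}_r$ be the set of exponents occurring in $h_{j,l}(X)$. For $i, j \in [J]$ let $\mathbf{d}_{ij}$ be the multiset $\{(e - e') \bmod r : l \in [L],\ e \in E_{i,l},\ e' \in E_{j,l}\}$, where, when $i = j$, the pairs with $e = e'$ are excluded. Then the code $C(H)$ has girth $g \ge 6$ if and only if $\mathbf{d}_{ij}$ is multiplicity free for all $i, j \in [J]$.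
   Context: The binary matrix $H$ associated with $\mathbf{H}(X)$ is obtained by replacing each entry $h_{j,l}(X) = \sum_{s=0}^{r-1} c_s X^s$ by the $r\times r$ binary circulant matrix with first row $(c_0,\ldots,c_{r-1})$ (each subsequent row being the cyclic right shift by one of the previous row). $C(H)$ is the null space of $H$. A cycle of length $2s$ in $H$ is an ordered list of $2s$ positions of $H$ such that all these entries equal $1$, consecutive positions alternately share a row (with different columns) or share a column (with different rows), and all $2s$ positions are distinct except that the first and last coincide; the girth of the code is the length of a shortest cycle (infinite if there is none). A multiset is multiplicity free if no element occurs more than once. $[J]=\{1,\ldots,J\}$. *)

From mathcomp Require Import all_boot.
Set Implicit Arguments. Unset Strict Implicit. Unset Printing Implicit Defensive.

Section QC.
Variables (r J L : nat).

(* A J x L polynomial matrix over F_2[X]/<X^r - 1>: entry (j,l) is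
   h_{j,l}(X) = \sum_{s<r} c j l s X^s, coefficients in F_2 = bool. *)
Definition polymx := 'I_J -> 'I_L -> {ffun 'I_r -> bool}.

(* rows of H indexed by (j, s) (row j*r + s), columns by (l, t) (column l*r+t) *)
Definition rowT := ('I_J * 'I_r)%type.
Definition colT := ('I_L * 'I_r)%type.
Definition posT := (rowT * colT)%type.

(* Circulant expansion: entry (s,t) of the circulant with first row
   (c_0,...,c_{r-1}) is c_{(t - s) mod r}. *)
Definition Hentry (c : polymx) (x : rowT) (y : colT) : bool :=
  [exists k : 'I_r, c x.1 y.1 k && (val k == (val y.2 + r - val x.2) %% r)].

Definition Eset (c : polymx) (j : 'I_J) (l : 'I_L) : {set 'I_r} :=
  [set k | c j l k].

Definition same_row (p q : posT) := (p.1 == q.1) && (p.2 != q.2).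
Definition same_col (p q : posT) := (p.2 == q.2) && (p.1 != q.1).

Definition is_cycle (c : polymx) (p : seq posT) : Prop :=
  let n := size p in
  [/\ 0 < n, ~~ odd n, uniq p,
      all (fun q => Hentry c q.1 q.2) p &
        (forall (p0 : posT) i, i < n ->
           (if odd i then same_col else same_row)
             (nth p0 p i) (nth p0 p (i.+1 %% n)))
        \/
        (forall (p0 : posT) i, i < n ->
           (if odd i then same_row else same_col)
             (nth p0 p i) (nth p0 p (i.+1 %% n)))].

(* girth >= g : every cycle has length at least g (girth infinite if no cycle) *)
Definition girth_ge (c : polymx) (g : nat) : Prop :=
  forall p : seq posT, is_cycle c p -> g <= size p.

Definition const_col_weight (c : polymx) : Prop :=
  exists w, forall y : colT, #|[set x : rowT | Hentry c x y]| = w.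
Definition const_row_weight (c : polymx) : Prop :=
  exists w, forall x : rowT, #|[set y : colT | Hentry c x y]| = w.

Definition dmult (c : polymx) (i j : 'I_J) : seq nat :=
  flatten [seq flatten [seq [seq (val e + r - val e') %% r
                                | e' <- enum (Eset c j l)
                                & (i != j) || (e != e')]
                            | e <- enum (Eset c i l)]
          | l <- enum 'I_L].

End QC.

(* A cycle of length 4 is a rectangle: rows x1 != x2 and columns y1 != y2 with
   all four entries equal to 1, and every cycle of length < 6 is one.  Writing
   H_{(j,s),(l,t)} = [t - s in E_{j,l}], a rectangle on rows (i,s), (j,s') and
   columns (l,t), (l',t') gives two distinct exponent pairs (t-s, t-s') and
   (t'-s, t'-s') in the blocks (i,l) and (i,l') with the same difference s' - s,
   i.e. a repeated element of d_{ij}.  Conversely a repetition e - e' = f - f'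
   is realised by the rectangle on rows (i,0), (j,e-e') and columns (l,e),
   (l',f). *)

From mathcomp Require Import all_boot ssralg zmodp.
Set Implicit Arguments. Unset Strict Implicit. Unset Printing Implicit Defensive.
Import GRing.Theory.

Lemma uniq_mapPn (T U : eqType) (f : T -> U) (s : seq T) : uniq s ->
  reflect (exists x y, [/\ x \in s, y \in s, x != y & f x = f y]) (~~ uniq (map f s)).
Proof.
move=> us; apply: (iffP idP) => [|[x [y [xs ys nxy fxy]]]].
  elim: s us => //= x s IH /andP[xs us]; rewrite negb_and negbK.
  case/orP=> [/mapP[y ys fxy] | /IH[// | y [z [ys zs nyz fyz]]]].
    by exists x, y; rewrite mem_head inE ys orbT fxy; split=> //; apply: contraNneq xs => ->.
  by exists y, z; rewrite !inE ys zs !orbT.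
rewrite (perm_uniq (perm_map f (perm_to_rem xs))) /= negb_and negbK.
by rewrite fxy map_f // (mem_rem_uniq _ us) inE eq_sym nxy.
Qed.

Lemma flatten_map_uniq (T U : eqType) (F : T -> seq U) (key : U -> T) (s : seq T) :
  uniq s -> {in s, forall x, uniq (F x)} -> (forall x y, y \in F x -> key y = x) ->
  uniq (flatten (map F s)).
Proof.
elim: s => //= x s IH /andP[xs us] uF kF; rewrite cat_uniq uF ?mem_head //=.
rewrite IH // ?andbT => [|z zs]; last by apply: uF; rewrite inE zs orbT.
apply/hasPn => y /flatten_mapP[z zs yz]; apply: contraNN xs => yx.
by rewrite -(kF _ _ yx) (kF _ _ yz).
Qed.

Section FourCycles.
Variables (r J L : nat) (c : polymx r J L).

Definition has_rectangle : Prop :=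
  exists (x1 x2 : rowT r J) (y1 y2 : colT r L),
    [/\ x1 != x2, y1 != y2 &
        [&& Hentry c x1 y1, Hentry c x1 y2, Hentry c x2 y1 & Hentry c x2 y2]].

Lemma rectangle_cycle4 : has_rectangle -> exists2 p, is_cycle c p & size p = 4.
Proof.
move=> [x1 [x2 [y1 [y2 [nx ny /and4P[h11 h12 h21 h22]]]]]].
exists [:: (x1, y1); (x1, y2); (x2, y2); (x2, y1)] => //; split => //.
- by rewrite /= !inE !xpair_eqE !eqxx (eq_sym y2) (negbTE nx) (negbTE ny).
- by rewrite /= h11 h12 h21 h22.
- left => p0 k; do 4?[case: k => [|k]] => //= _;
  by rewrite /same_row /same_col /= eqxx ?ny ?nx // eq_sym ?ny ?nx.
Qed.

Lemma short_cycle_rectangle (p : seq (posT r J L)) :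
  is_cycle c p -> size p < 6 -> has_rectangle.
Proof.
case: p => [|a [|b [|a' [|b' [|? [|? ?]]]]]] //= [_ //= _ _ hp step] _.
- case: step => step; have := step a 0 erefl; have := step a 1 erefl;
  rewrite /same_row /same_col /=.
  + by move=> /andP[_ n] /andP[/eqP e _]; rewrite e eqxx in n.
  + by move=> /andP[/eqP e _] /andP[_ n]; rewrite e eqxx in n.
case: a b a' b' hp step => [a1 a2] [b1 b2] [c1 c2] [d1 d2] /and5P[h1 h2 h3 h4 _].
case=> step; move: (step (a1, a2) 0 erefl) (step (a1, a2) 1 erefl)
  (step (a1, a2) 2 erefl) (step (a1, a2) 3 erefl); rewrite /same_row /same_col /=;
move=> /andP[/eqP e1 n1] /andP[/eqP e2 n2] /andP[/eqP e3 n3] /andP[/eqP e4 n4]; subst.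
- by exists b1, d1, a2, c2; split; rewrite ?h1 ?h2 ?h3 ?h4.
- by exists a1, c1, b2, d2; split; rewrite ?h1 ?h2 ?h3 ?h4.
Qed.

Lemma girth6P : girth_ge c 6 <-> ~ has_rectangle.
Proof.
split=> [g /rectangle_cycle4[p /g le6p p4] | nrect p cp]; first by rewrite p4 in le6p.
by rewrite leqNgt; apply/negP => /(short_cycle_rectangle cp).
Qed.

End FourCycles.

Lemma subrBB (V : zmodType) (x y z : V) : ((x - y) - (x - z) = z - y)%R.
Proof. by rewrite opprB addrC addrA subrK. Qed.

Lemma val_Zp_sub n (a b : 'I_n.+1) : val (a - b)%R = (a + n.+1 - b) %% n.+1.
Proof. by rewrite /= modnDmr addnBA // ltnW. Qed.

Section Differences.
Variables (n J L : nat) (c : polymx n.+1 J L).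
Local Open Scope ring_scope.

Lemma HentryE (x : rowT n.+1 J) (y : colT n.+1 L) : Hentry c x y = c x.1 y.1 (y.2 - x.2).
Proof.
apply/existsP/idP => [[k /andP[ck /eqP kE]] | cxy]; last first.
  by exists (y.2 - x.2); rewrite cxy val_Zp_sub eqxx.
by rewrite (_ : y.2 - x.2 = k) //; apply: val_inj; rewrite val_Zp_sub.
Qed.

Definition dmult_index (i j : 'I_J) : seq ('I_L * 'I_n.+1 * 'I_n.+1) :=
  flatten [seq flatten [seq [seq (l, e, e') | e' <- enum (Eset c j l)
                                             & (i != j) || (e != e')]
                       | e <- enum (Eset c i l)]
          | l <- enum 'I_L].

Lemma dmultE i j :
  dmult c i j =
    map val [seq t.1.2 - t.2 | t : 'I_L * 'I_n.+1 * 'I_n.+1 <- dmult_index i j].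
Proof.
rewrite -map_comp [RHS]map_flatten -map_comp; congr flatten; apply: eq_map => l /=.
rewrite [RHS]map_flatten -map_comp; congr flatten; apply: eq_map => e /=.
by rewrite -map_comp; apply: eq_map => e'; rewrite /= -val_Zp_sub.
Qed.

Lemma mem_dmult_index i j l e e' :
  ((l, e, e') \in dmult_index i j) = [&& c i l e, c j l e' & (i != j) || (e != e')].
Proof.
apply/flatten_mapP/and3P => [[l0 _ /flatten_mapP[e0 e0E /mapP[e1 e1E [-> -> ->]]]] |
                             [cil cjl ij]].
  by move: e0E e1E; rewrite mem_filter !mem_enum !inE => -> /andP[-> ->].
exists l; rewrite ?mem_enum //; apply/flatten_mapP; exists e; rewrite ?mem_enum ?inE //.
by apply/map_f; rewrite mem_filter ij mem_enum inE.
Qed.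

Lemma dmult_index_uniq i j : uniq (dmult_index i j).
Proof.
apply: (@flatten_map_uniq _ _ _ (fun t => t.1.1))
  => [||l _ /flatten_mapP[e _ /mapP[e' _ ->]]//].
  exact: enum_uniq.
move=> l _; apply: (@flatten_map_uniq _ _ _ (fun t => t.1.2)) => [||e _ /mapP[e' _ ->]//].
  exact: enum_uniq.
move=> e _; rewrite map_inj_uniq => [|e1 e2 [] //].
exact/filter_uniq/enum_uniq.
Qed.

Lemma dmult_uniqPn i j :
  reflect (exists t t', [/\ t \in dmult_index i j, t' \in dmult_index i j, t != t'
                           & t.1.2 - t.2 = t'.1.2 - t'.2])
          (~~ uniq (dmult c i j)).
Proof.
rewrite dmultE map_inj_uniq; last exact: val_inj.
exact/uniq_mapPn/dmult_index_uniq.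
Qed.

Lemma rectangle_dmult_dup : has_rectangle c -> exists i j, ~~ uniq (dmult c i j).
Proof.
move=> [[i s] [[j s'] [[l t] [[l' t'] [nx ny /and4P[]]]]]]; rewrite !HentryE /=.
move=> cil cil' cjl cjl'; exists i, j; apply/dmult_uniqPn.
have distinct_rows u : (i != j) || (u - s != u - s').
  by case: eqVneq => //= eij; apply: contraNneq nx => /subrI ->; rewrite eij.
exists (l, t - s, t - s'), (l', t' - s, t' - s'); split; rewrite ?subrBB //.
- by rewrite mem_dmult_index cil cjl distinct_rows.
- by rewrite mem_dmult_index cil' cjl' distinct_rows.
- apply: contra ny; rewrite !xpair_eqE => /andP[/andP[-> /eqP/subIr ->] _].
  by rewrite eqxx.
Qed.

Lemma dmult_dup_rectangle i j : ~~ uniq (dmult c i j) -> has_rectangle c.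
Proof.
case/dmult_uniqPn => -[[l e] e'] [[[l' f] f'] [/=]].
rewrite !mem_dmult_index => /and3P[cil cjl ne] /and3P[cil' cjl' _] nt def.
exists (i, 0), (j, e - e'), (l, e), (l', f); split.
- by rewrite xpair_eqE negb_and [0 == _]eq_sym subr_eq0.
- apply: contra nt; rewrite !xpair_eqE => /andP[-> /eqP ef].
  by move: def; rewrite ef => /subrI ->; rewrite !eqxx.
- by rewrite !HentryE /= !subr0 subKr def subKr cil cil' cjl cjl'.
Qed.

End Differences.

Theorem theorem11 (r J L : nat) (c : polymx r J L) :
  0 < r -> 0 < J -> 0 < L ->
  (forall (j : 'I_J) (l : 'I_L), #|Eset c j l| <= 2) ->
  const_col_weight c -> const_row_weight c ->
  (girth_ge c 6 <-> forall i j : 'I_J, uniq (dmult c i j)).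
Proof.
case: r c => [//|n] c _ _ _ _ _ _.
split=> [/girth6P no_rect i j | dmult_uniq].
  by apply/negPn/negP => /dmult_dup_rectangle.
by apply/girth6P; case/rectangle_dmult_dup => i [j]; rewrite dmult_uniq.
Qed.
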